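(* Suppose that $\alpha>0$ is irrational and $\bm f\in\mathscr{F}$ is such that $|f_\infty|$ is bounded away from zero. Then $y_\alpha^{\bm f}$ is nowhere differentiable on $[0,1]$.
   Context: Faber--Schauder functions: $e_{0,0}(t)=\max\{0,\min\{t,1-t\}\}$, $e_{n,k}(t)=2^{-n/2}e_{0,0}(2^nt-k)$ for $n\ge1$, $k=0,\dots,2^n-1$. $\mathscr{F}$ is the class of sequences $\bm f=(f_n)_{n\ge0}$ of bounded functions $f_n:[0,1]\to\mathbb{R}$ converging uniformly to a Riemann integrable function $f_\infty$. For $t\ge0$, $t\bmod 1:=t-\lfloor t\rfloor$. For $\bm f\in\mathscr{F}$ and $\alpha>0$, $y_\alpha^{\bm f}:=\sum_{n=0}^\infty\sum_{k=0}^{2^n-1}f_n(\alpha k\bmod 1)\,e_{n,k}$. *)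

From Stdlib Require Import Reals Lra Lia ZArith.
From Coquelicot Require Import Coquelicot.
Open Scope R_scope.

Definition e00 (t : R) : R := Rmax 0 (Rmin t (1 - t)).

Definition e_nk (n k : nat) (t : R) : R :=
  / sqrt (2 ^ n) * e00 (2 ^ n * t - INR k).

(* t mod 1 := t - floor t   (Stdlib: frac_part t = t - IZR (Int_part t), Int_part = floor) *)
Definition mod1 (t : R) : R := frac_part t.

Definition in_classF (f : nat -> R -> R) (finf : R -> R) : Prop :=
  (forall n, exists M, forall t, 0 <= t <= 1 -> Rabs (f n t) <= M) /\
  (forall eps, 0 < eps -> exists N : nat, forall n, (N <= n)%nat ->
       forall t, 0 <= t <= 1 -> Rabs (f n t - finf t) < eps) /\
  ex_RInt finf 0 1.

Definition y_alpha (alpha : R) (f : nat -> R -> R) (t : R) : R :=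
  Series (fun n => sum_f_R0 (fun k => f n (mod1 (alpha * INR k)) * e_nk n k t)
                            (2 ^ n - 1)%nat).

Definition irrational (x : R) : Prop :=
  forall (p q : Z), q <> 0%Z -> x <> IZR p / IZR q.

(* g : [0,1] -> R is differentiable at t in [0,1] (one-sided at the endpoints):
   the difference quotient over s in [0,1], s <> t, has a finite limit. *)
Definition differentiable_at01 (g : R -> R) (t : R) : Prop :=
  exists l : R, forall eps, 0 < eps -> exists delta, 0 < delta /\
    forall s, 0 <= s <= 1 -> s <> t -> Rabs (s - t) < delta ->
      Rabs ((g s - g t) / (s - t) - l) < eps.

Definition nowhere_differentiable01 (g : R -> R) : Prop :=
  forall t, 0 <= t <= 1 -> ~ differentiable_at01 g t.

From Stdlib Require Import Reals Lra Lia ZArith.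
From Coquelicot Require Import Coquelicot.
Open Scope R_scope.

(* For a Faber--Schauder series with coefficients c n k, the second difference
   2 y(m) - y(a) - y(b) over the dyadic interval [a, b] = [k 2^-n, (k+1) 2^-n]
   with midpoint m equals c n k 2^(-n/2): hats of lower level are affine on [a, b],
   hats of higher level vanish at a, m and b, and among the hats of level n only
   e_{n,k} is nonzero at m.  If y had derivative l at a point t of [a, b], the
   second difference would be o(b - a) = o(2^-n), forcing c n k = o(2^(-n/2)).
   For y_alpha^f the coefficients f_n(alpha k mod 1) stay close to f_inf, whose
   modulus is bounded below, so this decay is impossible. *)

Lemma e00_nonpos x : x <= 0 -> e00 x = 0.
Proof. intros. unfold e00, Rmax, Rmin. repeat destruct Rle_dec; lra. Qed.

Lemma e00_rising x : 0 <= x <= 1/2 -> e00 x = x.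
Proof. intros. unfold e00, Rmax, Rmin. repeat destruct Rle_dec; lra. Qed.

Lemma e00_falling x : 1/2 <= x <= 1 -> e00 x = 1 - x.
Proof. intros. unfold e00, Rmax, Rmin. repeat destruct Rle_dec; lra. Qed.

Lemma e00_ge1 x : 1 <= x -> e00 x = 0.
Proof. intros. unfold e00, Rmax, Rmin. repeat destruct Rle_dec; lra. Qed.

Lemma e00_IZR z : e00 (IZR z) = 0.
Proof.
  destruct (Z_le_gt_dec z 0) as [Hz|Hz].
  - apply e00_nonpos, IZR_le, Hz.
  - apply e00_ge1, IZR_le; lia.
Qed.

Lemma e00_IZR_add_half z : e00 (IZR z + 1/2) = if Z.eq_dec z 0 then 1/2 else 0.
Proof.
  destruct (Z.eq_dec z 0) as [->|Hz]; [rewrite e00_rising; lra|].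
  destruct (Z_le_gt_dec z 0) as [Hneg|Hpos].
  - apply e00_nonpos. assert (IZR z <= -1) by (apply IZR_le; lia). lra.
  - apply e00_ge1. assert (1 <= IZR z) by (apply IZR_le; lia). lra.
Qed.

(* The kinks of [e00] are at 0, 1/2 and 1, so no interval [q/2M, (q+1)/2M] straddles one. *)
Lemma e00_midpoint_affine (q M : Z) : (1 <= M)%Z ->
  let w := / (2 * IZR M) in
  2 * e00 ((IZR q + 1/2) * w) - e00 (IZR q * w) - e00 ((IZR q + 1) * w) = 0.
Proof.
  intros HM w.
  assert (HM' : 1 <= IZR M) by (apply IZR_le; lia).
  assert (Hw : 0 < w) by (apply Rinv_0_lt_compat; lra).
  assert (Hw1 : 2 * IZR M * w = 1) by (unfold w; field; lra).
  destruct (ltac:(lia) : (q + 1 <= 0 \/ (0 <= q /\ q + 1 <= M)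
                          \/ (M <= q /\ q + 1 <= 2 * M) \/ 2 * M <= q)%Z)
    as [C|[[C1 C2]|[[C1 C2]|C]]].
  - apply IZR_le in C. rewrite plus_IZR in C.
    rewrite !e00_nonpos; nra.
  - apply IZR_le in C1. apply IZR_le in C2. rewrite plus_IZR in C2.
    rewrite !e00_rising; try split; nra.
  - apply IZR_le in C1. apply IZR_le in C2. rewrite plus_IZR, mult_IZR in C2.
    rewrite !e00_falling; try split; nra.
  - apply IZR_le in C. rewrite mult_IZR in C.
    rewrite !e00_ge1; nra.
Qed.

Definition dyadic (n j : nat) : R := INR j / 2 ^ n.

Lemma pow2_pos n : 0 < 2 ^ n.
Proof. apply pow_lt; lra. Qed.

Lemma INR_pow2 n : INR (2 ^ n) = 2 ^ n.
Proof. rewrite pow_INR; reflexivity. Qed.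

Lemma dyadic_succ_sub n k : dyadic n (S k) - dyadic n k = / 2 ^ n.
Proof. unfold dyadic. rewrite S_INR. field. apply pow_nonzero; lra. Qed.

Lemma dyadic_midpoint n k :
  dyadic (S n) (2 * k + 1) = (dyadic n k + dyadic n (S k)) / 2.
Proof.
  unfold dyadic. rewrite S_INR, plus_INR, mult_INR. simpl.
  field. apply pow_nonzero; lra.
Qed.

Lemma dyadic_ge0 n j : 0 <= dyadic n j.
Proof. unfold dyadic. apply Rdiv_le_0_compat; [apply pos_INR | apply pow2_pos]. Qed.

Lemma e_nk_dyadic_coarser p m i j : (m <= p)%nat -> e_nk p i (dyadic m j) = 0.
Proof.
  intros Hmp. unfold e_nk, dyadic.
  replace (2 ^ p * (INR j / 2 ^ m) - INR i)
    with (IZR (Z.of_nat (2 ^ (p - m) * j) - Z.of_nat i)).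
  - rewrite e00_IZR. ring.
  - rewrite minus_IZR, <- !INR_IZR_INZ, mult_INR, INR_pow2.
    replace p with ((p - m) + m)%nat at 2 by lia. rewrite pow_add.
    field. apply pow_nonzero; lra.
Qed.

Lemma e_nk_dyadic_mid n i k :
  e_nk n i (dyadic (S n) (2 * k + 1)) =
  if Nat.eq_dec i k then / sqrt (2 ^ n) / 2 else 0.
Proof.
  unfold e_nk, dyadic.
  replace (2 ^ n * (INR (2 * k + 1) / 2 ^ S n) - INR i)
    with (IZR (Z.of_nat k - Z.of_nat i) + 1/2).
  - rewrite e00_IZR_add_half.
    destruct (Z.eq_dec _ _), (Nat.eq_dec i k); try lia; unfold Rdiv; ring.
  - rewrite minus_IZR, <- !INR_IZR_INZ, plus_INR, mult_INR, INR_1. simpl.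
    field. apply pow_nonzero; lra.
Qed.

Definition cell_second_diff (g : R -> R) (n k : nat) : R :=
  2 * g (dyadic (S n) (2 * k + 1)) - g (dyadic n k) - g (dyadic n (S k)).

Lemma cell_second_diff_scale (c : R) g n k :
  cell_second_diff (fun t => c * g t) n k = c * cell_second_diff g n k.
Proof. unfold cell_second_diff. ring. Qed.

Lemma cell_second_diff_sum (F : nat -> R -> R) N n k :
  cell_second_diff (fun t => sum_f_R0 (fun p => F p t) N) n k =
  sum_f_R0 (fun p => cell_second_diff (F p) n k) N.
Proof.
  induction N as [|N IH]; unfold cell_second_diff in *; cbn [sum_f_R0]; [ring|].
  rewrite <- IH. ring.
Qed.

Lemma cell_second_diff_e_nk_diag n i k :
  cell_second_diff (e_nk n i) n k = if Nat.eq_dec i k then / sqrt (2 ^ n) else 0.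
Proof.
  unfold cell_second_diff.
  rewrite e_nk_dyadic_mid, !e_nk_dyadic_coarser by lia.
  destruct (Nat.eq_dec i k); field.
  apply Rgt_not_eq, sqrt_lt_R0, pow2_pos.
Qed.

Lemma cell_second_diff_e_nk_coarse p n i k :
  (p < n)%nat -> cell_second_diff (e_nk p i) n k = 0.
Proof.
  intros Hpn. unfold cell_second_diff, e_nk, dyadic.
  replace n with (p + S (n - S p))%nat by lia. set (r := (n - S p)%nat).
  set (M := Z.of_nat (2 ^ r)).
  set (q := (Z.of_nat k - 2 * M * Z.of_nat i)%Z).
  assert (EM : IZR M = 2 ^ r) by (unfold M; rewrite <- INR_IZR_INZ, INR_pow2; reflexivity).
  assert (HM : (1 <= M)%Z) by (apply le_IZR; rewrite EM; apply pow_R1_Rle; lra).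
  assert (Eq : IZR q = INR k - 2 * 2 ^ r * INR i).
  { unfold q. rewrite minus_IZR, !mult_IZR, EM, <- !INR_IZR_INZ. ring. }
  pose proof (pow2_pos r). pose proof (pow2_pos p).
  pose proof (e00_midpoint_affine q M HM) as L. cbv zeta in L.
  replace (2 ^ p * (INR (2 * k + 1) / 2 ^ S (p + S r)) - INR i)
    with ((IZR q + 1/2) * / (2 * IZR M)).
  replace (2 ^ p * (INR k / 2 ^ (p + S r)) - INR i)
    with (IZR q * / (2 * IZR M)).
  replace (2 ^ p * (INR (S k) / 2 ^ (p + S r)) - INR i)
    with ((IZR q + 1) * / (2 * IZR M)).
  - rewrite <- (Rmult_0_r (/ sqrt (2 ^ p))), <- L. ring.
  all: rewrite Eq, EM, ?S_INR, ?plus_INR, ?mult_INR, ?INR_1; simpl pow;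
       rewrite ?pow_add; simpl pow; change (INR 2) with 2; field; lra.
Qed.

Lemma cell_second_diff_e_nk_fine p n i k :
  (n < p)%nat -> cell_second_diff (e_nk p i) n k = 0.
Proof.
  intros Hnp. unfold cell_second_diff.
  rewrite !e_nk_dyadic_coarser by lia. ring.
Qed.

Lemma sum_f_R0_eventually_const (a : nat -> R) N n :
  (forall p, (N < p)%nat -> a p = 0) -> (N <= n)%nat -> sum_f_R0 a n = sum_f_R0 a N.
Proof.
  intros Ha HNn. induction HNn as [|n HNn IH]; [reflexivity|].
  cbn [sum_f_R0]. rewrite IH, Ha by lia. ring.
Qed.

Lemma Series_eventually_zero (a : nat -> R) N :
  (forall p, (N < p)%nat -> a p = 0) -> Series a = sum_f_R0 a N.
Proof.
  intros Ha. apply is_series_unique.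
  change (is_lim_seq (sum_n a) (sum_f_R0 a N)).
  apply (is_lim_seq_ext_loc (fun _ => sum_f_R0 a N)); [|apply is_lim_seq_const].
  exists N. intros n HNn. rewrite sum_n_Reals.
  symmetry. apply sum_f_R0_eventually_const; assumption.
Qed.

Lemma sum_f_R0_single (a : nat -> R) N k : (k <= N)%nat ->
  (forall i, (i <= N)%nat -> i <> k -> a i = 0) -> sum_f_R0 a N = a k.
Proof.
  intros HkN Ha. induction N as [|N IH]; cbn [sum_f_R0].
  - f_equal. lia.
  - destruct (Nat.eq_dec k (S N)) as [->|Hk].
    + rewrite sum_eq_R0; [ring|]. intros i Hi. apply Ha; lia.
    + rewrite IH, (Ha (S N)) by (try lia; intros; apply Ha; lia). ring.
Qed.

Definition schauder_level (c : nat -> nat -> R) (n : nat) (t : R) : R :=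
  sum_f_R0 (fun k => c n k * e_nk n k t) (2 ^ n - 1).

Definition schauder_series (c : nat -> nat -> R) (t : R) : R :=
  Series (fun n => schauder_level c n t).

Lemma y_alpha_schauder_series alpha f :
  y_alpha alpha f = schauder_series (fun n k => f n (mod1 (alpha * INR k))).
Proof. reflexivity. Qed.

Lemma schauder_series_dyadic c m j N : (m <= S N)%nat ->
  schauder_series c (dyadic m j) = sum_f_R0 (fun p => schauder_level c p (dyadic m j)) N.
Proof.
  intros HmN. apply Series_eventually_zero. intros p Hp.
  apply sum_eq_R0. intros i _. rewrite e_nk_dyadic_coarser by lia. ring.
Qed.

Lemma cell_second_diff_schauder_level c p n k : p <> n ->
  cell_second_diff (schauder_level c p) n k = 0.
Proof.
  intros Hpn. unfold schauder_level.
  rewrite (cell_second_diff_sum (fun i t => c p i * e_nk p i t)).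
  apply sum_eq_R0. intros i _. rewrite cell_second_diff_scale.
  destruct (Nat.lt_gt_cases p n) as [[Hlt|Hgt] _]; [exact Hpn| |].
  - rewrite cell_second_diff_e_nk_coarse by exact Hlt. ring.
  - rewrite cell_second_diff_e_nk_fine by exact Hgt. ring.
Qed.

Lemma cell_second_diff_schauder_level_diag c n k : (k < 2 ^ n)%nat ->
  cell_second_diff (schauder_level c n) n k = c n k / sqrt (2 ^ n).
Proof.
  intros Hk. unfold schauder_level.
  rewrite (cell_second_diff_sum (fun i t => c n i * e_nk n i t)).
  rewrite (sum_f_R0_single _ _ k); [| lia |].
  - rewrite cell_second_diff_scale, cell_second_diff_e_nk_diag.
    destruct Nat.eq_dec as [_|]; [reflexivity|lia].
  - intros i _ Hik. rewrite cell_second_diff_scale, cell_second_diff_e_nk_diag.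
    destruct Nat.eq_dec; [lia|ring].
Qed.

Lemma cell_second_diff_schauder_series c n k : (k < 2 ^ n)%nat ->
  cell_second_diff (schauder_series c) n k = c n k / sqrt (2 ^ n).
Proof.
  intros Hk.
  transitivity (cell_second_diff (fun t => sum_f_R0 (fun p => schauder_level c p t) n) n k).
  { unfold cell_second_diff. rewrite !(schauder_series_dyadic c _ _ n) by lia. reflexivity. }
  rewrite cell_second_diff_sum, (sum_f_R0_single _ n n); [| lia |].
  - apply cell_second_diff_schauder_level_diag, Hk.
  - intros p _ Hpn. apply cell_second_diff_schauder_level, Hpn.
Qed.

Lemma nat_unit_interval_cover N z : 0 <= z <= INR (S N) ->
  exists k, (k <= N)%nat /\ INR k <= z <= INR k + 1.
Proof.
  induction N as [|N IH]; intros Hz.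
  - exists 0%nat. simpl in *. split; [lia|lra].
  - destruct (Rle_dec z (INR (S N))) as [Hle|Hgt].
    + destruct IH as [k [HkN Hk]]; [lra|]. exists k. split; [lia|exact Hk].
    + exists (S N). rewrite (S_INR (S N)) in Hz. split; [lia|lra].
Qed.

Lemma dyadic_cell_cover n t : 0 <= t <= 1 ->
  exists k, (k < 2 ^ n)%nat /\ dyadic n k <= t <= dyadic n (S k).
Proof.
  intros Ht. pose proof (pow2_pos n) as Hn.
  assert (Hpow : S (2 ^ n - 1) = (2 ^ n)%nat)
    by (pose proof (Nat.pow_nonzero 2 n); lia).
  destruct (nat_unit_interval_cover (2 ^ n - 1) (t * 2 ^ n)) as [k [Hk Htk]].
  { rewrite Hpow, INR_pow2. nra. }
  exists k. unfold dyadic. rewrite S_INR. split; [lia|].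
  split; [apply Rle_div_l | apply Rle_div_r]; lra.
Qed.

Lemma remainder_le_of_difference_quotient (g : R -> R) t l eps delta x :
  (forall s, 0 <= s <= 1 -> s <> t -> Rabs (s - t) < delta ->
     Rabs ((g s - g t) / (s - t) - l) < eps) ->
  0 < eps -> 0 <= x <= 1 -> Rabs (x - t) < delta ->
  Rabs (g x - g t - l * (x - t)) <= eps * Rabs (x - t).
Proof.
  intros Hq Heps Hx Hxt.
  destruct (Req_dec x t) as [->|Hne].
  - rewrite !Rminus_diag, Rmult_0_r, Rminus_0_r, Rabs_R0. lra.
  - replace (g x - g t - l * (x - t)) with (((g x - g t) / (x - t) - l) * (x - t))
      by (field; lra).
    rewrite Rabs_mult. apply Rmult_le_compat_r; [apply Rabs_pos|].
    left. apply Hq; assumption.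
Qed.

(* The three nodes satisfy [2 m - a - b = 0], so the linear part [l (x - t)] cancels. *)
Lemma cell_second_diff_le (g : R -> R) t l eps delta n k :
  (forall s, 0 <= s <= 1 -> s <> t -> Rabs (s - t) < delta ->
     Rabs ((g s - g t) / (s - t) - l) < eps) ->
  0 < eps -> dyadic n k <= t <= dyadic n (S k) -> dyadic n (S k) <= 1 ->
  / 2 ^ n < delta ->
  Rabs (cell_second_diff g n k) <= 4 * eps / 2 ^ n.
Proof.
  intros Hq Heps Ht Hb1 Hdelta.
  pose proof (dyadic_succ_sub n k) as Hba. pose proof (dyadic_midpoint n k) as Hm.
  pose proof (dyadic_ge0 n k) as Ha0.
  set (a := dyadic n k) in *. set (b := dyadic n (S k)) in *.
  set (m := dyadic (S n) (2 * k + 1)) in *.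
  set (rem x := g x - g t - l * (x - t)).
  assert (Hrem : forall x, a <= x <= b -> Rabs (rem x) <= eps / 2 ^ n).
  { intros x Hx.
    assert (Hxt : Rabs (x - t) <= / 2 ^ n) by (apply Rabs_le_between; lra).
    eapply Rle_trans.
    - apply (remainder_le_of_difference_quotient g t l eps delta); [assumption..|lra|lra].
    - unfold Rdiv. apply Rmult_le_compat_l; lra. }
  replace (cell_second_diff g n k) with (2 * rem m - rem a - rem b)
    by (unfold cell_second_diff, rem; fold a b m; cbv beta; rewrite Hm; field).
  pose proof (Hrem m ltac:(lra)) as Hmr. pose proof (Hrem a ltac:(lra)) as Har.
  pose proof (Hrem b ltac:(lra)) as Hbr.
  apply Rabs_le_between in Hmr, Har, Hbr. apply Rabs_le_between. lra.
Qed.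

Lemma differentiable_schauder_coeff_decay c t : 0 <= t <= 1 ->
  differentiable_at01 (schauder_series c) t ->
  forall eps, 0 < eps -> exists N, forall n, (N <= n)%nat ->
    exists k, (k < 2 ^ n)%nat /\ Rabs (c n k) <= eps / sqrt (2 ^ n).
Proof.
  intros Ht [l Hl] eps Heps.
  destruct (Hl (eps / 4)) as [delta [Hdelta Hq]]; [lra|].
  destruct (pow_lt_1_zero (/ 2) ltac:(rewrite Rabs_pos_eq; lra) delta Hdelta) as [N HN].
  exists N. intros n Hn.
  destruct (dyadic_cell_cover n t Ht) as [k [Hk Htk]].
  exists k. split; [exact Hk|].
  assert (Hb1 : dyadic n (S k) <= 1).
  { unfold dyadic. apply Rle_div_l; [apply pow2_pos|].
    rewrite Rmult_1_l, <- INR_pow2. apply le_INR. lia. }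
  assert (Hsmall : / 2 ^ n < delta).
  { specialize (HN n Hn). rewrite pow_inv, Rabs_pos_eq in HN; [exact HN|].
    left. apply Rinv_0_lt_compat, pow2_pos. }
  pose proof (cell_second_diff_le _ t l (eps / 4) delta n k Hq ltac:(lra) Htk Hb1 Hsmall)
    as Hbound.
  rewrite cell_second_diff_schauder_series in Hbound by exact Hk.
  pose proof (sqrt_lt_R0 _ (pow2_pos n)) as Hs.
  pose proof (sqrt_sqrt (2 ^ n) (Rlt_le _ _ (pow2_pos n))) as Hss.
  set (s := sqrt (2 ^ n)) in *.
  rewrite Rabs_div, (Rabs_pos_eq s), <- Hss in Hbound by lra.
  apply (Rmult_le_reg_r (/ s)); [apply Rinv_0_lt_compat; lra|].
  replace (eps / s * / s) with (4 * (eps / 4) / (s * s)) by (field; lra).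
  exact Hbound.
Qed.

Lemma mod1_unit_interval x : 0 <= mod1 x <= 1.
Proof. unfold mod1. destruct (base_fp x). lra. Qed.

Lemma one_le_sqrt_pow2 n : 1 <= sqrt (2 ^ n).
Proof. rewrite <- sqrt_1. apply sqrt_le_1_alt, pow_R1_Rle. lra. Qed.

Theorem proposition2p7 (alpha : R) (f : nat -> R -> R) (finf : R -> R) :
  0 < alpha -> irrational alpha ->
  in_classF f finf ->
  (exists c, 0 < c /\ forall t, 0 <= t <= 1 -> c <= Rabs (finf t)) ->
  nowhere_differentiable01 (y_alpha alpha f).
Proof.
  intros _ _ [_ [Hunif _]] [c [Hc Hlow]] t Ht Hdiff.
  rewrite y_alpha_schauder_series in Hdiff.
  destruct (differentiable_schauder_coeff_decay _ t Ht Hdiff (c / 4)) as [N1 HN1]; [lra|].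
  destruct (Hunif (c / 2)) as [N2 HN2]; [lra|].
  set (n := Nat.max N1 N2).
  destruct (HN1 n) as [k [_ Hsmall]]; [lia|].
  set (x := mod1 (alpha * INR k)) in Hsmall.
  pose proof (mod1_unit_interval (alpha * INR k)) as Hx. fold x in Hx.
  pose proof (HN2 n ltac:(lia) x Hx) as Hclose.
  pose proof (Hlow x Hx) as Hfinf.
  assert (Hdecay : c / 4 / sqrt (2 ^ n) <= c / 4).
  { pose proof (one_le_sqrt_pow2 n). apply Rle_div_l; nra. }
  pose proof (Rabs_triang_inv (finf x) (f n x)) as Htri.
  rewrite Rabs_minus_sym in Htri.
  lra.
Qed.
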